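(* For each of the three cases $d=2,4,8$ (the manifold of flags in the projective plane over $\mathbb C$, $\mathbb H$, $\mathbb O$), there exists a $G$-invariant metric on $M=G/K$ with positive definite Ricci tensor whose Ricci flow reaches, at some later time, a $G$-invariant metric whose Ricci tensor has signature $(d,2d)$, i.e. it has $d$ negative and $2d$ positive eigenvalues.
   Context: Let $(G,K,d)$ be one of the following three triples: - $(SU(3),T^2,2)$, with $T^2$ a maximal torus; - $(Sp(3),Sp(1)\times Sp(1)\times Sp(1),4)$; - (compact $F_4$, $Spin(8)$, $8$). Let $M=G/K$, a manifold of dimension $3d$. With the $\mathrm{Ad}(G)$-invariant inner product $\langle X,Y\rangle_0=-\tfrac12\mathrm{Re}\,\mathrm{tr}(XY)$ (for $F_4$, the invariant inner product agreeing with it on a compatibly embedded $Sp(3)$), let $\mathfrak p=\mathfrak k^\perp=V_1\oplus V_2\oplus V_3$ be the decomposition into three pairwise inequivalent irreducible $\mathrm{Ad}(K)$-invariant subspaces of dimension $d$. $G$-invariant metrics are $g\leftrightarrow(x_1,x_2,x_3)$, corresponding to $\sum_i x_i\langle\cdot,\cdot\rangle_0|_{V_i}$ with $x_i>0$. Their Ricci tensor is $\sum_i x_ir_i\langle\cdot,\cdot\rangle_0|_{V_i}$, where $$r_i=\frac{d x_i^2-d x_j^2-d x_k^2+(10d-8)x_jx_k}{2x_1x_2x_3},\qquad\{i,j,k\}=\{1,2,3\}.$$ The Ricci flow $\partial_tg=-2\mathrm{Ric}(g)$ on these metrics is the ODE system $\frac{dx_i}{dt}=-2r_ix_i$. *)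

From Stdlib Require Export Reals.
Open Scope R_scope.

(* Ricci eigenvalue r_i of the G-invariant metric (x_i, x_j, x_k) on V_i,
   where {i,j,k} = {1,2,3}:
   r_i = (d x_i^2 - d x_j^2 - d x_k^2 + (10d-8) x_j x_k) / (2 x_1 x_2 x_3). *)
Definition ric (d xi xj xk : R) : R :=
  (d * xi ^ 2 - d * xj ^ 2 - d * xk ^ 2 + (10 * d - 8) * xj * xk)
  / (2 * xi * xj * xk).

Definition r1 (d x1 x2 x3 : R) : R := ric d x1 x2 x3.
Definition r2 (d x1 x2 x3 : R) : R := ric d x2 x1 x3.
Definition r3 (d x1 x2 x3 : R) : R := ric d x3 x1 x2.

(* Ricci tensor sum_i x_i r_i <,>_0|V_i is positive definite w.r.t. g
   iff all r_i > 0 (x_i > 0). *)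
Definition ricci_pos_def (d x1 x2 x3 : R) : Prop :=
  0 < r1 d x1 x2 x3 /\ 0 < r2 d x1 x2 x3 /\ 0 < r3 d x1 x2 x3.

(* Signature (d, 2d): each r_i has multiplicity d, so exactly one r_i is
   negative and the other two are positive. *)
Definition ricci_signature_d_2d (d x1 x2 x3 : R) : Prop :=
  let a := r1 d x1 x2 x3 in let b := r2 d x1 x2 x3 in let c := r3 d x1 x2 x3 in
  (a < 0 /\ 0 < b /\ 0 < c) \/ (0 < a /\ b < 0 /\ 0 < c) \/
  (0 < a /\ 0 < b /\ c < 0).

Definition ricci_flow_on (d : R) (x1 x2 x3 : R -> R) (T : R) : Prop :=
  forall t, 0 <= t <= T ->
    0 < x1 t /\ 0 < x2 t /\ 0 < x3 t /\
    derivable_pt_lim x1 t (-2 * r1 d (x1 t) (x2 t) (x3 t) * x1 t) /\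
    derivable_pt_lim x2 t (-2 * r2 d (x1 t) (x2 t) (x3 t) * x2 t) /\
    derivable_pt_lim x3 t (-2 * r3 d (x1 t) (x2 t) (x3 t) * x3 t).

(* Positive Ricci curvature means r_1, r_2, r_3 > 0.  We start
   at an explicit metric x lying just inside the face r_3 = 0 of this cone
   (r_3(x) is positive but tiny), and show that after a short time T the
   flow has crossed it: r_1, r_2 > 0 > r_3.  No closed form of the flow is
   needed, only a rigorous enclosure of it:
   - a Picard-Lindelof theorem for a bounded Lipschitz vector field on R^3
     (limits of Picard iterates, fundamental theorem of calculus);
   - the Ricci flow field, written as a rational function, is Lipschitz on
     any cube away from 0 and has explicit lower/upper bounds there; clamping
     it to a cube around x gives a solution of the genuine flow which, by the
     mean value theorem, stays between the lines of those extreme slopes;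
   - the signs of r_i on the resulting box at time T follow from the extreme
     values of their numerators.
   The theorem then reduces to finitely many rational inequalities, checked
   by linear arithmetic for an explicit choice of data in each dimension. *)

From Stdlib Require Import Reals Lra Lia.
From Coquelicot Require Import Coquelicot.
Open Scope R_scope.

Lemma continuous_of_lipschitz_at (g : R -> R) x K : 0 <= K ->
  (forall y, Rabs (g y - g x) <= K * Rabs (y - x)) -> continuous g x.
Proof.
  intros HK Hg. apply continuity_pt_filterlim. intros eps Heps.
  assert (Hd : 0 < eps / (K + 1)) by (apply Rdiv_lt_0_compat; lra).
  exists (eps / (K + 1)). split; [exact Hd|].
  intros y [_ Hy]. unfold R_dist in *. simpl in *. unfold R_dist in *.
  assert (Hprod : K * Rabs (y - x) <= K * (eps / (K + 1)))
    by (apply Rmult_le_compat_l; lra).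
  assert (eps / (K + 1) * (K + 1) = eps) by (field; lra).
  specialize (Hg y). nra.
Qed.

Lemma ex_RInt_of_continuous (g : R -> R) x y :
  (forall z, continuous g z) -> ex_RInt g x y.
Proof.
  intros Hg. apply (@ex_RInt_continuous R_CompleteNormedModule). intros; apply Hg.
Qed.

Lemma RInt_abs_le (g : R -> R) x y K :
  (forall z, continuous g z) ->
  (forall z, Rmin x y <= z <= Rmax x y -> Rabs (g z) <= K) ->
  Rabs (RInt g x y) <= K * Rabs (y - x).
Proof.
  intros Hg Hb. destruct (Rle_dec x y) as [Hxy|Hxy].
  - rewrite Rmin_left, Rmax_right in Hb by lra.
    rewrite (Rabs_right (y - x)), Rmult_comm by lra.
    apply abs_RInt_le_const; auto. apply ex_RInt_of_continuous, Hg.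
  - rewrite Rmin_right, Rmax_left in Hb by lra.
    rewrite <- opp_RInt_swap by (apply ex_RInt_of_continuous, Hg).
    rewrite Rabs_Ropp, (Rabs_left (y - x)) by lra.
    replace (- (y - x)) with (x - y) by ring. rewrite Rmult_comm.
    apply abs_RInt_le_const; [lra | apply ex_RInt_of_continuous, Hg | auto].
Qed.

Lemma RInt_0_minus (g : R -> R) t s : (forall z, continuous g z) ->
  RInt g 0 t - RInt g 0 s = RInt g s t.
Proof.
  intros Hg.
  rewrite <- (RInt_Chasles g s 0 t), <- (opp_RInt_swap g 0 s)
    by (apply ex_RInt_of_continuous, Hg).
  unfold plus, opp. simpl. ring.
Qed.

Lemma RInt_minus_continuous (f g : R -> R) x y :
  (forall z, continuous f z) -> (forall z, continuous g z) ->
  RInt f x y - RInt g x y = RInt (fun z => f z - g z) x y.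
Proof.
  intros Hf Hg. rewrite (RInt_minus f g) by (apply ex_RInt_of_continuous; auto).
  reflexivity.
Qed.

Lemma Rabs_between_0 t z : Rmin 0 t <= z <= Rmax 0 t -> Rabs z <= Rabs t.
Proof. unfold Rmin, Rmax; destruct (Rle_dec 0 t); intros; split_Rabs; lra. Qed.

Lemma geometric_tail (u : nat -> R) B : 0 <= B ->
  (forall n, Rabs (u (S n) - u n) <= B * (/2) ^ n) ->
  forall n m, (n <= m)%nat -> Rabs (u m - u n) <= 2 * B * (/2) ^ n.
Proof.
  intros HB Hstep n m Hnm.
  assert (Htail : forall k, Rabs (u (n + k)%nat - u n)
                           <= 2 * B * ((/2) ^ n - (/2) ^ (n + k))).
  { induction k as [|k IH].
    - rewrite Nat.add_0_r, Rminus_diag, Rabs_R0. lra.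
    - rewrite Nat.add_succ_r.
      replace ((/2) ^ S (n + k)) with (/2 * (/2) ^ (n + k)) by reflexivity.
      replace (u (S (n + k)) - u n)
        with ((u (S (n + k)) - u (n + k)%nat) + (u (n + k)%nat - u n)) by ring.
      specialize (Hstep (n + k)%nat).
      pose proof (Rabs_triang (u (S (n + k)) - u (n + k)%nat) (u (n + k)%nat - u n)).
      lra. }
  replace m with (n + (m - n))%nat by lia.
  pose proof (pow_le (/2) (n + (m - n)) ltac:(lra)).
  specialize (Htail (m - n)%nat). nra.
Qed.

Lemma geometric_limit (u : nat -> R) B : 0 <= B ->
  (forall n, Rabs (u (S n) - u n) <= B * (/2) ^ n) ->
  { l : R | forall n, Rabs (l - u n) <= 2 * B * (/2) ^ n }.
Proof.
  intros HB Hstep.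
  assert (Hcauchy : Cauchy_crit u).
  { intros eps Heps.
    assert (Hp : 0 < eps / (4 * B + 1)) by (apply Rdiv_lt_0_compat; lra).
    destruct (pow_lt_1_zero (/2) ltac:(rewrite Rabs_right; lra) _ Hp) as [N HN].
    specialize (HN N (le_n N)).
    rewrite Rabs_right in HN by (apply Rle_ge, pow_le; lra).
    exists N. intros n m Hn Hm. unfold R_dist.
    pose proof (geometric_tail u B HB Hstep N n Hn).
    pose proof (geometric_tail u B HB Hstep N m Hm).
    pose proof (Rabs_triang (u n - u N) (- (u m - u N))) as Htri.
    rewrite Rabs_Ropp in Htri.
    replace (u n - u N + - (u m - u N)) with (u n - u m) in Htri by ring.
    assert (2 * B * (/2) ^ N <= 2 * B * (eps / (4 * B + 1)))
      by (apply Rmult_le_compat_l; lra).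
    assert (eps / (4 * B + 1) * (4 * B + 1) = eps) by (field; lra).
    nra. }
  destruct (Rcomplete.R_complete u Hcauchy) as [l Hl]. exists l. intros n.
  apply Rnot_lt_le. intros Hgt.
  destruct (Hl (Rabs (l - u n) - 2 * B * (/2) ^ n) ltac:(lra)) as [N HN].
  specialize (HN (Nat.max N n) ltac:(lia)). unfold R_dist in HN.
  pose proof (geometric_tail u B HB Hstep n (Nat.max N n) ltac:(lia)).
  pose proof (Rabs_triang (u (Nat.max N n) - u n) (- (u (Nat.max N n) - l))) as Htri.
  rewrite Rabs_Ropp in Htri.
  replace (u (Nat.max N n) - u n + - (u (Nat.max N n) - l)) with (l - u n) in Htri
    by ring.
  lra.
Qed.

Lemma le_of_geometric_slack a c K : 0 <= K ->
  (forall n, a <= c + K * (/2) ^ n) -> a <= c.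
Proof.
  intros HK H. apply Rnot_lt_le. intros Hca.
  assert (Hp : 0 < (a - c) / (K + 1)) by (apply Rdiv_lt_0_compat; lra).
  destruct (pow_lt_1_zero (/2) ltac:(rewrite Rabs_right; lra) _ Hp) as [N HN].
  specialize (HN N (le_n N)). specialize (H N).
  rewrite Rabs_right in HN by (apply Rle_ge, pow_le; lra).
  assert (K * (/2) ^ N <= K * ((a - c) / (K + 1))) by (apply Rmult_le_compat_l; lra).
  assert ((a - c) / (K + 1) * (K + 1) = a - c) by (field; lra).
  pose proof (pow_le (/2) N ltac:(lra)).
  nra.
Qed.

Definition clamp (lo hi x : R) : R := Rmin hi (Rmax lo x).

Lemma clamp_in lo hi x : lo <= hi -> lo <= clamp lo hi x <= hi.
Proof. unfold clamp, Rmax, Rmin. intros. repeat destruct Rle_dec; lra. Qed.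

Lemma clamp_id lo hi x : lo <= x <= hi -> clamp lo hi x = x.
Proof. unfold clamp, Rmax, Rmin. intros. repeat destruct Rle_dec; lra. Qed.

Lemma clamp_lipschitz lo hi x y : Rabs (clamp lo hi x - clamp lo hi y) <= Rabs (x - y).
Proof. unfold clamp, Rmax, Rmin. repeat destruct Rle_dec; split_Rabs; lra. Qed.

Lemma derivative_enclosure (f df : R -> R) m M T :
  (forall t, 0 <= t <= T -> derivable_pt_lim f t (df t)) ->
  (forall t, 0 <= t <= T -> m <= df t <= M) ->
  forall t, 0 <= t <= T -> f 0 + t * m <= f t <= f 0 + t * M.
Proof.
  intros Hd Hb t Ht. destruct (Req_dec t 0) as [->|Ht0]; [lra|].
  destruct (MVT_cor2 f df 0 t ltac:(lra)) as [c [Hc Hct]].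
  { intros c Hc. apply Hd. lra. }
  specialize (Hb c ltac:(lra)). nra.
Qed.

(* The three coordinates of a G-invariant metric; a state is a point of R^3. *)
Inductive axis := ax1 | ax2 | ax3.

Definition dist1 (v w : axis -> R) : R :=
  Rabs (v ax1 - w ax1) + Rabs (v ax2 - w ax2) + Rabs (v ax3 - w ax3).

Lemma dist1_le v w K : (forall i, Rabs (v i - w i) <= K) -> dist1 v w <= 3 * K.
Proof.
  intros H. unfold dist1. pose proof (H ax1). pose proof (H ax2). pose proof (H ax3).
  lra.
Qed.

(* The solution is the limit of the Picard iterates, which
   contract by a factor 1/2 at each step. *)
Section PicardLindelof.

Variable G : axis -> (axis -> R) -> R.
Variables (L Mb tau : R) (a : axis -> R).
Hypothesis L_ge0 : 0 <= L.
Hypothesis tau_gt0 : 0 < tau.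
Hypothesis contraction : 6 * L * tau <= 1.
Hypothesis G_bounded : forall i v, Rabs (G i v) <= Mb.
Hypothesis G_lipschitz : forall i v w, Rabs (G i v - G i w) <= L * dist1 v w.

Lemma Mb_ge0 : 0 <= Mb.
Proof. eapply Rle_trans; [apply Rabs_pos | apply (G_bounded ax1 a)]. Qed.

Fixpoint picard (n : nat) (t : R) : axis -> R :=
  match n with
  | O => a
  | S n => fun i => a i + RInt (fun s => G i (picard n s)) 0 t
  end.

Lemma G_along_continuous (f : R -> axis -> R) K i : 0 <= K ->
  (forall j t s, Rabs (f t j - f s j) <= K * Rabs (t - s)) ->
  forall z, continuous (fun s => G i (f s)) z.
Proof.
  intros HK Hf z. apply (continuous_of_lipschitz_at _ _ (L * (3 * K))).
  - apply Rmult_le_pos; lra.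
  - intros y. eapply Rle_trans; [apply G_lipschitz|].
    rewrite Rmult_assoc. apply Rmult_le_compat_l; [exact L_ge0|].
    rewrite Rmult_assoc. apply dist1_le. auto.
Qed.

Lemma picard_lipschitz n : forall j t s,
  Rabs (picard n t j - picard n s j) <= Mb * Rabs (t - s).
Proof.
  pose proof Mb_ge0. induction n as [|n IH]; intros j t s; simpl.
  - rewrite Rminus_diag, Rabs_R0. apply Rmult_le_pos; [lra | apply Rabs_pos].
  - rewrite Rminus_plus_l_l, RInt_0_minus by (apply (G_along_continuous _ Mb); auto).
    apply RInt_abs_le; [apply (G_along_continuous _ Mb); auto | auto].
Qed.

Lemma picard_continuous n i z : continuous (fun s => G i (picard n s)) z.
Proof. apply (G_along_continuous _ Mb); [apply Mb_ge0 | apply picard_lipschitz]. Qed.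

Lemma picard_step n : forall i t, Rabs t <= tau ->
  Rabs (picard (S n) t i - picard n t i) <= Mb * tau * (/2) ^ n.
Proof.
  pose proof Mb_ge0. induction n as [|n IH]; intros i t Ht.
  - simpl. rewrite Rplus_minus_l. eapply Rle_trans.
    + apply RInt_abs_le; [intros; apply continuous_const | intros; auto].
    + rewrite Rminus_0_r. pose proof (Rabs_pos t). nra.
  - change (Rabs ((a i + RInt (fun s => G i (picard (S n) s)) 0 t) -
                  (a i + RInt (fun s => G i (picard n s)) 0 t))
            <= Mb * tau * (/2) ^ S n).
    rewrite Rminus_plus_l_l, RInt_minus_continuous by apply picard_continuous.
    set (X := Mb * tau * (/2) ^ n).
    assert (HX : 0 <= X) by (apply Rmult_le_pos; [nra | apply pow_le; lra]).
    eapply Rle_trans.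
    + apply (RInt_abs_le _ _ _ (L * (3 * X))).
      * intros z. apply (continuous_minus (fun s => G i (picard (S n) s))
                                          (fun s => G i (picard n s)));
          apply picard_continuous.
      * intros z Hz. pose proof (Rabs_between_0 _ _ Hz).
        eapply Rle_trans; [apply G_lipschitz|].
        apply Rmult_le_compat_l; [exact L_ge0|].
        apply dist1_le. intros j. apply IH. lra.
    + rewrite Rminus_0_r.
      assert (L * (3 * X) * Rabs t <= L * (3 * X) * tau)
        by (apply Rmult_le_compat_l; [apply Rmult_le_pos|]; lra).
      replace (Mb * tau * (/2) ^ S n) with (X / 2) by (unfold X; simpl; field).
      nra.
Qed.

Definition clamp_time (t : R) : R := clamp (- tau) tau t.

Lemma clamp_time_in t : Rabs (clamp_time t) <= tau.
Proof. pose proof (clamp_in (- tau) tau t ltac:(lra)). unfold clamp_time. split_Rabs; lra. Qed.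

Lemma picard_step_clamped i t n :
  Rabs (picard (S n) (clamp_time t) i - picard n (clamp_time t) i)
  <= Mb * tau * (/2) ^ n.
Proof. apply picard_step, clamp_time_in. Qed.

(* The solution: the limit of the iterates, extended constantly outside
   [-tau, tau] so that it is globally Lipschitz. *)
Definition solution (i : axis) (t : R) : R :=
  proj1_sig (geometric_limit (fun n => picard n (clamp_time t) i) (Mb * tau)
    (Rmult_le_pos _ _ Mb_ge0 (Rlt_le _ _ tau_gt0)) (picard_step_clamped i t)).

Lemma solution_approx i t n :
  Rabs (solution i t - picard n (clamp_time t) i) <= 2 * (Mb * tau) * (/2) ^ n.
Proof. unfold solution. destruct geometric_limit as [l Hl]. apply Hl. Qed.

Lemma solution_lipschitz i t s :
  Rabs (solution i t - solution i s) <= Mb * Rabs (t - s).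
Proof.
  pose proof Mb_ge0.
  apply (le_of_geometric_slack _ _ (4 * (Mb * tau))); [nra|]. intros n.
  pose proof (solution_approx i t n). pose proof (solution_approx i s n).
  pose proof (picard_lipschitz n i (clamp_time t) (clamp_time s)).
  assert (Mb * Rabs (clamp_time t - clamp_time s) <= Mb * Rabs (t - s))
    by (apply Rmult_le_compat_l; [lra | apply clamp_lipschitz]).
  set (pt := picard n (clamp_time t) i) in *. set (ps := picard n (clamp_time s) i) in *.
  pose proof (Rabs_triang (solution i t - pt) (pt - solution i s)) as T1.
  pose proof (Rabs_triang (pt - ps) (- (solution i s - ps))) as T2.
  rewrite Rabs_Ropp in T2.
  replace (solution i t - pt + (pt - solution i s))
    with (solution i t - solution i s) in T1 by ring.
  replace (pt - ps + - (solution i s - ps)) with (pt - solution i s) in T2 by ring.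
  lra.
Qed.

Lemma solution_continuous i z :
  continuous (fun s => G i (fun j => solution j s)) z.
Proof.
  apply (G_along_continuous _ Mb); [apply Mb_ge0 | intros; apply solution_lipschitz].
Qed.

Lemma solution_integral i t : Rabs t <= tau ->
  solution i t = a i + RInt (fun s => G i (fun j => solution j s)) 0 t.
Proof.
  intros Ht. pose proof Mb_ge0.
  set (I := RInt (fun s => G i (fun j => solution j s)) 0 t).
  assert (Hsmall : Rabs (solution i t - (a i + I)) <= 0).
  { apply (le_of_geometric_slack _ _ (2 * (Mb * tau) + L * (6 * (Mb * tau)) * tau)).
    { assert (0 <= L * (6 * (Mb * tau)) * tau) by
        (repeat apply Rmult_le_pos; lra). nra. }
    intros n.
    pose proof (solution_approx i t (S n)) as Happrox.
    unfold clamp_time in Happrox.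
    rewrite (clamp_id _ _ t) in Happrox by (split_Rabs; lra). simpl in Happrox.
    set (In := RInt (fun s => G i (picard n s)) 0 t) in Happrox.
    assert (Hint : Rabs (I - In) <= L * (3 * (2 * (Mb * tau) * (/2) ^ n)) * Rabs t).
    { unfold I, In. rewrite RInt_minus_continuous
        by (apply solution_continuous || apply picard_continuous).
      replace (Rabs t) with (Rabs (t - 0)) by (rewrite Rminus_0_r; reflexivity).
      apply RInt_abs_le.
      - intros z. apply (continuous_minus (fun s => G i (fun j => solution j s))
                                          (fun s => G i (picard n s)));
          [apply solution_continuous | apply picard_continuous].
      - intros z Hz. pose proof (Rabs_between_0 _ _ Hz).
        eapply Rle_trans; [apply G_lipschitz|].
        apply Rmult_le_compat_l; [exact L_ge0|]. apply dist1_le. intros j.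
        pose proof (solution_approx j z n) as Hj.
        unfold clamp_time in Hj. rewrite clamp_id in Hj by (split_Rabs; lra). exact Hj. }
    pose proof (pow_le (/2) n ltac:(lra)).
    assert (0 <= Mb * tau * (/2) ^ n) by (apply Rmult_le_pos; nra).
    replace ((/2) ^ S n) with (/2 * (/2) ^ n) in Happrox by reflexivity.
    assert (L * (3 * (2 * (Mb * tau) * (/2) ^ n)) * Rabs t
            <= L * (3 * (2 * (Mb * tau) * (/2) ^ n)) * tau)
      by (apply Rmult_le_compat_l; [repeat apply Rmult_le_pos|]; lra).
    pose proof (Rabs_triang (solution i t - (a i + In)) (- (I - In))) as Htri.
    rewrite Rabs_Ropp in Htri.
    replace (solution i t - (a i + In) + - (I - In)) with (solution i t - (a i + I))
      in Htri by ring.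
    nra. }
  pose proof (Rabs_pos (solution i t - (a i + I))).
  assert (Hzero : Rabs (solution i t - (a i + I)) = 0) by lra.
  apply Rabs_eq_0 in Hzero. lra.
Qed.

Lemma solution_initial i : solution i 0 = a i.
Proof.
  rewrite solution_integral by (rewrite Rabs_R0; lra).
  rewrite RInt_point. unfold zero; simpl. ring.
Qed.

Lemma solution_derivative i t : Rabs t < tau ->
  derivable_pt_lim (solution i) t (G i (fun j => solution j t)).
Proof.
  intros Ht. apply is_derive_Reals.
  assert (Hp : 0 < tau - Rabs t) by lra.
  apply (is_derive_ext_loc
           (fun y => a i + RInt (fun s => G i (fun j => solution j s)) 0 y)).
  - exists (mkposreal _ Hp). intros y Hy. simpl in Hy.
    unfold ball in Hy; simpl in Hy.
    unfold AbsRing_ball, abs, minus, plus, opp in Hy; simpl in Hy.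
    symmetry. apply solution_integral. split_Rabs; lra.
  - replace (G i (fun j => solution j t))
      with (plus zero (G i (fun j => solution j t))) by apply plus_zero_l.
    apply (is_derive_plus (fun _ => a i)
             (fun y => RInt (fun s => G i (fun j => solution j s)) 0 y)).
    + exact (@is_derive_const R_AbsRing R_NormedModule (a i) t).
    + apply (is_derive_RInt (fun s => G i (fun j => solution j s)) _ 0).
      * apply filter_forall. intros y.
        apply (@RInt_correct R_CompleteNormedModule).
        apply ex_RInt_of_continuous, solution_continuous.
      * apply solution_continuous.
Qed.

End PicardLindelof.

Theorem picard_lindelof (G : axis -> (axis -> R) -> R) L Mb tau (a : axis -> R) :
  0 <= L -> 0 < tau -> 6 * L * tau <= 1 ->
  (forall i v, Rabs (G i v) <= Mb) ->
  (forall i v w, Rabs (G i v - G i w) <= L * dist1 v w) ->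
  exists y : axis -> R -> R, (forall i, y i 0 = a i) /\
    forall i t, Rabs t < tau -> derivable_pt_lim (y i) t (G i (fun j => y j t)).
Proof.
  intros HL Htau Hc Hb Hl.
  exists (solution G L Mb tau a HL Htau Hc Hb Hl). split.
  - apply solution_initial.
  - apply solution_derivative.
Qed.

(* For positive coordinates, the Ricci flow velocity [-2 r_i x_i] of a
   coordinate [a] with companions [b], [c] is the rational function below;
   contrary to [ric] it is directly amenable to interval estimates. *)
Definition ricci_speed (d a b c : R) : R :=
  - d * ((a / b) * (a / c)) + d * (b / c) + d * (c / b) - (10 * d - 8).

Lemma ricci_speed_eq d a b c : 0 < a -> 0 < b -> 0 < c ->
  -2 * ric d a b c * a = ricci_speed d a b c.
Proof. intros. unfold ric, ricci_speed. field. lra. Qed.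

Lemma Rabs_triang3 x y z : Rabs (x + y + z) <= Rabs x + Rabs y + Rabs z.
Proof.
  pose proof (Rabs_triang (x + y) z). pose proof (Rabs_triang x y). lra.
Qed.

Lemma quot_lipschitz lo hi u u' v v' : 0 < lo ->
  lo <= u <= hi -> lo <= u' <= hi -> lo <= v <= hi -> lo <= v' <= hi ->
  Rabs (u / v - u' / v') <= hi / lo ^ 2 * (Rabs (u - u') + Rabs (v - v')).
Proof.
  intros Hlo Hu Hu' Hv Hv'.
  assert (Hlo2 : 0 < lo ^ 2) by nra.
  assert (Hden : lo ^ 2 <= v * v') by nra.
  assert (E : Rabs (u / v - u' / v') * (v * v')
              = Rabs ((u - u') * v' + u' * (v' - v))).
  { rewrite <- (Rabs_right (v * v')) by nra. rewrite <- Rabs_mult.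
    f_equal. field. lra. }
  assert (Hnum : Rabs ((u - u') * v' + u' * (v' - v))
                 <= hi * (Rabs (u - u') + Rabs (v - v'))).
  { eapply Rle_trans; [apply Rabs_triang|]. rewrite !Rabs_mult.
    rewrite (Rabs_right v'), (Rabs_right u'), (Rabs_minus_sym v' v) by lra.
    pose proof (Rabs_pos (u - u')). pose proof (Rabs_pos (v - v')). nra. }
  pose proof (Rabs_pos (u / v - u' / v')).
  apply (Rmult_le_reg_r (lo ^ 2)); [exact Hlo2|].
  replace (hi / lo ^ 2 * (Rabs (u - u') + Rabs (v - v')) * lo ^ 2)
    with (hi * (Rabs (u - u') + Rabs (v - v'))) by (field; lra).
  nra.
Qed.

Lemma quot_le lo hi u v : 0 < lo -> lo <= u <= hi -> lo <= v <= hi ->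
  Rabs (u / v) <= hi / lo.
Proof.
  intros. rewrite Rabs_right by (left; apply Rdiv_lt_0_compat; lra).
  apply Rmult_le_compat; try lra.
  - left; apply Rinv_0_lt_compat; lra.
  - apply Rinv_le_contravar; lra.
Qed.

Lemma prod_lipschitz p q p' q' r : Rabs q <= r -> Rabs p' <= r ->
  Rabs (p * q - p' * q') <= r * (Rabs (p - p') + Rabs (q - q')).
Proof.
  intros Hq Hp. replace (p * q - p' * q') with ((p - p') * q + p' * (q - q')) by ring.
  eapply Rle_trans; [apply Rabs_triang|]. rewrite !Rabs_mult.
  pose proof (Rabs_pos (p - p')). pose proof (Rabs_pos (q - q')). nra.
Qed.

Lemma square_ratio_lipschitz lo hi a b c a' b' c' : 0 < lo ->
  lo <= a <= hi -> lo <= b <= hi -> lo <= c <= hi ->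
  lo <= a' <= hi -> lo <= b' <= hi -> lo <= c' <= hi ->
  Rabs ((a / b) * (a / c) - (a' / b') * (a' / c'))
  <= hi ^ 2 / lo ^ 3 * (2 * Rabs (a - a') + Rabs (b - b') + Rabs (c - c')).
Proof.
  intros Hlo Ha Hb Hc Ha' Hb' Hc'.
  eapply Rle_trans.
  - apply (prod_lipschitz _ _ _ _ (hi / lo)); [apply (quot_le lo) | apply (quot_le lo)]; auto.
  - replace (hi ^ 2 / lo ^ 3) with (hi / lo * (hi / lo ^ 2)) by (field; lra).
    rewrite Rmult_assoc. apply Rmult_le_compat_l; [apply Rdiv_le_0_compat; lra|].
    pose proof (quot_lipschitz lo hi a a' b b' Hlo Ha Ha' Hb Hb').
    pose proof (quot_lipschitz lo hi a a' c c' Hlo Ha Ha' Hc Hc').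
    lra.
Qed.

Lemma ricci_speed_lipschitz d lo hi a b c a' b' c' : 0 <= d -> 0 < lo ->
  lo <= a <= hi -> lo <= b <= hi -> lo <= c <= hi ->
  lo <= a' <= hi -> lo <= b' <= hi -> lo <= c' <= hi ->
  Rabs (ricci_speed d a b c - ricci_speed d a' b' c')
  <= 3 * d * hi ^ 2 / lo ^ 3 * (Rabs (a - a') + Rabs (b - b') + Rabs (c - c')).
Proof.
  intros Hd Hlo Ha Hb Hc Ha' Hb' Hc'.
  set (K := hi ^ 2 / lo ^ 3).
  assert (HK1 : 0 <= hi / lo ^ 2) by (apply Rdiv_le_0_compat; nra).
  assert (HK1K : hi / lo ^ 2 <= K).
  { unfold K. replace (hi ^ 2 / lo ^ 3) with (hi / lo ^ 2 * (hi / lo)) by (field; lra).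
    assert (1 <= hi / lo) by (apply (Rmult_le_reg_r lo); [lra|];
      unfold Rdiv; rewrite Rmult_assoc, Rinv_l; lra).
    nra. }
  pose proof (Rabs_pos (a - a')). pose proof (Rabs_pos (b - b')).
  pose proof (Rabs_pos (c - c')).
  pose proof (square_ratio_lipschitz lo hi a b c a' b' c' Hlo Ha Hb Hc Ha' Hb' Hc')
    as Hsq.
  fold K in Hsq.
  pose proof (quot_lipschitz lo hi b b' c c' Hlo Hb Hb' Hc Hc').
  pose proof (quot_lipschitz lo hi c c' b b' Hlo Hc Hc' Hb Hb').
  assert (Hbc : Rabs (b / c - b' / c') <= K * (Rabs (b - b') + Rabs (c - c'))) by nra.
  assert (Hcb : Rabs (c / b - c' / b') <= K * (Rabs (b - b') + Rabs (c - c'))) by nra.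
  unfold ricci_speed.
  replace (- d * (a / b * (a / c)) + d * (b / c) + d * (c / b) - (10 * d - 8) -
     (- d * (a' / b' * (a' / c')) + d * (b' / c') + d * (c' / b') - (10 * d - 8)))
    with (d * - (a / b * (a / c) - a' / b' * (a' / c')) + d * (b / c - b' / c')
          + d * (c / b - c' / b')) by ring.
  eapply Rle_trans; [apply Rabs_triang3|].
  rewrite !Rabs_mult, Rabs_Ropp, (Rabs_right d) by lra.
  replace (3 * d * hi ^ 2 / lo ^ 3) with (d * (3 * K)) by (unfold K; field; lra).
  assert (0 <= K) by lra.
  assert (0 <= d * K) by (apply Rmult_le_pos; lra).
  nra.
Qed.

Definition speed_lower (d w a b c : R) : R :=
  - d * (((a + w) / (b - w)) * ((a + w) / (c - w)))
  + d * ((b - w) / (c + w)) + d * ((c - w) / (b + w)) - (10 * d - 8).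

Definition speed_upper (d w a b c : R) : R :=
  - d * (((a - w) / (b + w)) * ((a - w) / (c + w)))
  + d * ((b + w) / (c - w)) + d * ((c + w) / (b - w)) - (10 * d - 8).

Lemma le_div_compat x y z u : 0 < y -> 0 < u -> 0 <= x <= z -> u <= y -> x / y <= z / u.
Proof.
  intros. apply Rmult_le_compat; try lra.
  - left; apply Rinv_0_lt_compat; lra.
  - apply Rinv_le_contravar; lra.
Qed.

Lemma ricci_speed_enclosure d w a b c a' b' c' : 0 <= d ->
  0 < a - w -> 0 < b - w -> 0 < c - w ->
  a - w <= a' <= a + w -> b - w <= b' <= b + w -> c - w <= c' <= c + w ->
  speed_lower d w a b c <= ricci_speed d a' b' c' <= speed_upper d w a b c.
Proof.
  intros Hd Ha0 Hb0 Hc0 Ha Hb Hc. unfold speed_lower, speed_upper, ricci_speed.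
  assert (a' / b' <= (a + w) / (b - w)) by (apply le_div_compat; lra).
  assert ((a - w) / (b + w) <= a' / b') by (apply le_div_compat; lra).
  assert (a' / c' <= (a + w) / (c - w)) by (apply le_div_compat; lra).
  assert ((a - w) / (c + w) <= a' / c') by (apply le_div_compat; lra).
  assert (b' / c' <= (b + w) / (c - w)) by (apply le_div_compat; lra).
  assert ((b - w) / (c + w) <= b' / c') by (apply le_div_compat; lra).
  assert (c' / b' <= (c + w) / (b - w)) by (apply le_div_compat; lra).
  assert ((c - w) / (b + w) <= c' / b') by (apply le_div_compat; lra).
  assert (0 <= (a - w) / (b + w)) by (apply Rdiv_le_0_compat; lra).
  assert (0 <= (a - w) / (c + w)) by (apply Rdiv_le_0_compat; lra).
  assert (a' / b' * (a' / c') <= (a + w) / (b - w) * ((a + w) / (c - w)))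
    by (apply Rmult_le_compat; lra).
  assert ((a - w) / (b + w) * ((a - w) / (c + w)) <= a' / b' * (a' / c'))
    by (apply Rmult_le_compat; lra).
  split; nra.
Qed.

Definition others (i : axis) : axis * axis :=
  match i with ax1 => (ax2, ax3) | ax2 => (ax1, ax3) | ax3 => (ax1, ax2) end.

Definition ricci_field (d : R) (v : axis -> R) (i : axis) : R :=
  ricci_speed d (v i) (v (fst (others i))) (v (snd (others i))).

Definition field_lower (d w : R) (x : axis -> R) (i : axis) : R :=
  speed_lower d w (x i) (x (fst (others i))) (x (snd (others i))).

Definition field_upper (d w : R) (x : axis -> R) (i : axis) : R :=
  speed_upper d w (x i) (x (fst (others i))) (x (snd (others i))).

Definition clamp_cube (x : axis -> R) (w : R) (v : axis -> R) (i : axis) : R :=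
  clamp (x i - w) (x i + w) (v i).

Lemma dist1_others (v v' : axis -> R) i :
  Rabs (v i - v' i) + Rabs (v (fst (others i)) - v' (fst (others i)))
  + Rabs (v (snd (others i)) - v' (snd (others i))) = dist1 v v'.
Proof. unfold dist1. destruct i; simpl; ring. Qed.

(* The Ricci field clamped to the cube of radius [w] around [x]: it agrees
   with the genuine field on the cube and inherits there its bounds and its
   Lipschitz constant, but globally. *)
Definition clamped_field (d w : R) (x : axis -> R) (i : axis) (v : axis -> R) : R :=
  ricci_field d (clamp_cube x w v) i.

Section ClampedField.

Variables (d w lo hi : R) (x : axis -> R).
Hypothesis d_gt0 : 0 < d.
Hypothesis w_ge0 : 0 <= w.
Hypothesis lo_gt0 : 0 < lo.
Hypothesis cube_in : forall i, lo <= x i - w /\ x i + w <= hi.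

Lemma clamp_cube_in v i : x i - w <= clamp_cube x w v i <= x i + w.
Proof. apply clamp_in. lra. Qed.

Lemma clamped_field_enclosure i v :
  field_lower d w x i <= clamped_field d w x i v <= field_upper d w x i.
Proof.
  unfold clamped_field, ricci_field, field_lower, field_upper.
  pose proof (cube_in i). pose proof (cube_in (fst (others i))).
  pose proof (cube_in (snd (others i))).
  apply ricci_speed_enclosure; try apply clamp_cube_in; lra.
Qed.

Definition field_bound : R :=
  Rabs (field_lower d w x ax1) + Rabs (field_upper d w x ax1)
  + Rabs (field_lower d w x ax2) + Rabs (field_upper d w x ax2)
  + Rabs (field_lower d w x ax3) + Rabs (field_upper d w x ax3).

Lemma clamped_field_bounded i v : Rabs (clamped_field d w x i v) <= field_bound.
Proof.
  pose proof (clamped_field_enclosure i v).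
  assert (Rabs (clamped_field d w x i v)
          <= Rabs (field_lower d w x i) + Rabs (field_upper d w x i))
    by (split_Rabs; lra).
  unfold field_bound.
  pose proof (Rabs_pos (field_lower d w x ax1)). pose proof (Rabs_pos (field_upper d w x ax1)).
  pose proof (Rabs_pos (field_lower d w x ax2)). pose proof (Rabs_pos (field_upper d w x ax2)).
  pose proof (Rabs_pos (field_lower d w x ax3)). pose proof (Rabs_pos (field_upper d w x ax3)).
  destruct i; lra.
Qed.

Lemma clamped_field_lipschitz i v v' :
  Rabs (clamped_field d w x i v - clamped_field d w x i v')
  <= 3 * d * hi ^ 2 / lo ^ 3 * dist1 v v'.
Proof.
  assert (Hbox : forall u j, lo <= clamp_cube x w u j <= hi).
  { intros u j. pose proof (clamp_cube_in u j). pose proof (cube_in j). lra. }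
  assert (Hhi : lo <= hi) by (destruct (cube_in ax1); lra).
  unfold clamped_field, ricci_field.
  eapply Rle_trans; [apply (ricci_speed_lipschitz d lo hi); auto; lra|].
  apply Rmult_le_compat_l.
  - apply Rdiv_le_0_compat; [|apply pow_lt; lra].
    apply Rmult_le_pos; [lra | apply pow_le; lra].
  - rewrite <- (dist1_others v v' i). unfold clamp_cube.
    pose proof (clamp_lipschitz (x i - w) (x i + w) (v i) (v' i)).
    pose proof (clamp_lipschitz (x (fst (others i)) - w) (x (fst (others i)) + w)
                  (v (fst (others i))) (v' (fst (others i)))).
    pose proof (clamp_lipschitz (x (snd (others i)) - w) (x (snd (others i)) + w)
                  (v (snd (others i))) (v' (snd (others i)))).
    lra.
Qed.

End ClampedField.

Lemma clamped_field_in_cube d w (x y : axis -> R) i :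
  (forall j, x j - w <= y j <= x j + w) ->
  clamped_field d w x i y = ricci_field d y i.
Proof.
  intros Hy. unfold clamped_field, ricci_field, clamp_cube.
  rewrite !clamp_id by apply Hy. reflexivity.
Qed.

Lemma ricci_flow_in_cube d (x : axis -> R) w lo hi T :
  0 < d -> 0 <= w -> 0 < lo -> 0 < T ->
  (forall i, lo <= x i - w /\ x i + w <= hi) ->
  18 * d * hi ^ 2 * T < lo ^ 3 ->
  (forall i, - w <= T * field_lower d w x i /\ T * field_upper d w x i <= w) ->
  exists y : axis -> R -> R,
    (forall i, y i 0 = x i) /\
    ricci_flow_on d (y ax1) (y ax2) (y ax3) T /\
    (forall i t, 0 <= t <= T ->
       x i + t * field_lower d w x i <= y i t <= x i + t * field_upper d w x i).
Proof.
  intros Hd Hw Hlo HT Hcube HT_small Hslopes.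
  set (L := 3 * d * hi ^ 2 / lo ^ 3).
  assert (HL : 0 < L).
  { unfold L. destruct (Hcube ax1).
    apply Rdiv_lt_0_compat; [apply Rmult_lt_0_compat|]; try apply pow_lt; lra. }
  set (tau := / (6 * L)).
  assert (Htau : 6 * L * tau = 1) by (unfold tau; field; lra).
  assert (HTtau : T < tau).
  { assert (6 * L * T < 1); [|nra]. unfold L.
    apply (Rmult_lt_reg_r (lo ^ 3)); [apply pow_lt; lra|].
    replace (6 * (3 * d * hi ^ 2 / lo ^ 3) * T * lo ^ 3) with (18 * d * hi ^ 2 * T)
      by (field; lra). lra. }
  destruct (picard_lindelof (clamped_field d w x) L (field_bound d w x) tau x
              ltac:(lra) ltac:(nra) ltac:(lra)
              (clamped_field_bounded d w lo hi x Hd Hw Hlo Hcube)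
              (clamped_field_lipschitz d w lo hi x Hd Hw Hlo Hcube)) as [y [Hy0 Hy']].
  assert (Htraj : forall i t, 0 <= t <= T ->
            x i + t * field_lower d w x i <= y i t <= x i + t * field_upper d w x i).
  { intros i. rewrite <- (Hy0 i).
    apply (derivative_enclosure _ (fun t => clamped_field d w x i (fun j => y j t))).
    - intros t Ht. apply Hy'. split_Rabs; lra.
    - intros t Ht. apply (clamped_field_enclosure d w lo hi x Hd Hw Hlo Hcube). }
  assert (Hstay : forall i t, 0 <= t <= T -> x i - w <= y i t <= x i + w).
  { intros i t Ht. specialize (Htraj i t Ht). specialize (Hslopes i).
    destruct (Rle_dec 0 (field_lower d w x i));
    destruct (Rle_dec 0 (field_upper d w x i)); nra. }
  assert (Hflow : forall i t, 0 <= t <= T ->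
    derivable_pt_lim (y i) t
      (-2 * ric d (y i t) (y (fst (others i)) t) (y (snd (others i)) t) * y i t)).
  { intros i t Ht.
    pose proof (Hstay i t Ht). pose proof (Hcube i).
    pose proof (Hstay (fst (others i)) t Ht). pose proof (Hcube (fst (others i))).
    pose proof (Hstay (snd (others i)) t Ht). pose proof (Hcube (snd (others i))).
    rewrite ricci_speed_eq by lra.
    change (ricci_speed d (y i t) (y (fst (others i)) t) (y (snd (others i)) t))
      with (ricci_field d (fun j => y j t) i).
    rewrite <- (clamped_field_in_cube d w x) by (intros j; exact (Hstay j t Ht)).
    apply Hy'. split_Rabs; lra. }
  exists y. split; [exact Hy0|]. split; [|exact Htraj].
  intros t Ht.
  pose proof (Hstay ax1 t Ht). pose proof (Hstay ax2 t Ht). pose proof (Hstay ax3 t Ht).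
  pose proof (Hcube ax1). pose proof (Hcube ax2). pose proof (Hcube ax3).
  repeat split; try lra.
  - exact (Hflow ax1 t Ht).
  - exact (Hflow ax2 t Ht).
  - exact (Hflow ax3 t Ht).
Qed.

(* Uniform sign of [ric d a b c] over a box, read off the extreme values of
   its numerator (the denominator being positive). *)
Lemma ric_pos_on_box d a b c la lb hb lc hc : 0 < d -> 8 <= 10 * d ->
  0 < la <= a -> 0 < lb -> lb <= b <= hb -> 0 < lc -> lc <= c <= hc ->
  0 < d * la ^ 2 - d * hb ^ 2 - d * hc ^ 2 + (10 * d - 8) * lb * lc ->
  0 < ric d a b c.
Proof.
  intros Hd Hk Ha Hlb Hb Hlc Hc H. unfold ric.
  assert (la ^ 2 <= a ^ 2) by nra. assert (b ^ 2 <= hb ^ 2) by nra.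
  assert (c ^ 2 <= hc ^ 2) by nra. assert (lb * lc <= b * c) by nra.
  apply Rdiv_lt_0_compat; [nra|].
  repeat apply Rmult_lt_0_compat; lra.
Qed.

Lemma ric_neg_on_box d a b c ha lb hb lc hc : 0 < d -> 8 <= 10 * d ->
  0 < a <= ha -> 0 < lb -> lb <= b <= hb -> 0 < lc -> lc <= c <= hc ->
  d * ha ^ 2 - d * lb ^ 2 - d * lc ^ 2 + (10 * d - 8) * hb * hc < 0 ->
  ric d a b c < 0.
Proof.
  intros Hd Hk Ha Hlb Hb Hlc Hc H. unfold ric.
  assert (a ^ 2 <= ha ^ 2) by nra. assert (lb ^ 2 <= b ^ 2) by nra.
  assert (lc ^ 2 <= c ^ 2) by nra. assert (b * c <= hb * hc) by nra.
  assert (Hnum : d * a ^ 2 - d * b ^ 2 - d * c ^ 2 + (10 * d - 8) * b * c < 0) by nra.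
  assert (0 < 2 * a * b * c) by (repeat apply Rmult_lt_0_compat; lra).
  unfold Rdiv. assert (0 < / (2 * a * b * c)) by (apply Rinv_0_lt_compat; lra).
  nra.
Qed.

Lemma signature_third_negative_on_box d p1 q1 p2 q2 p3 q3 y1 y2 y3 :
  p1 <= y1 <= q1 -> p2 <= y2 <= q2 -> p3 <= y3 <= q3 ->
  0 < d -> 8 <= 10 * d -> 0 < p1 -> 0 < p2 -> 0 < p3 ->
  0 < d * p1 ^ 2 - d * q2 ^ 2 - d * q3 ^ 2 + (10 * d - 8) * p2 * p3 ->
  0 < d * p2 ^ 2 - d * q1 ^ 2 - d * q3 ^ 2 + (10 * d - 8) * p1 * p3 ->
  d * q3 ^ 2 - d * p1 ^ 2 - d * p2 ^ 2 + (10 * d - 8) * q1 * q2 < 0 ->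
  ricci_signature_d_2d d y1 y2 y3.
Proof.
  intros H1 H2 H3 Hd Hk Hp1 Hp2 Hp3 Hr1 Hr2 Hr3.
  unfold ricci_signature_d_2d, r1, r2, r3. right; right. repeat split.
  - apply (ric_pos_on_box d _ _ _ p1 p2 q2 p3 q3); lra.
  - apply (ric_pos_on_box d _ _ _ p2 p1 q1 p3 q3); lra.
  - apply (ric_neg_on_box d _ _ _ q3 p1 q1 p2 q2); lra.
Qed.

Lemma positive_to_mixed_signature d (x : axis -> R) w lo hi T :
  0 < d -> 0 <= w -> 0 < lo -> 0 < T ->
  (forall i, lo <= x i - w /\ x i + w <= hi) ->
  18 * d * hi ^ 2 * T < lo ^ 3 ->
  (forall i, - w <= T * field_lower d w x i /\ T * field_upper d w x i <= w) ->
  ricci_pos_def d (x ax1) (x ax2) (x ax3) ->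
  (forall y : axis -> R,
     (forall i, x i + T * field_lower d w x i <= y i <= x i + T * field_upper d w x i) ->
     ricci_signature_d_2d d (y ax1) (y ax2) (y ax3)) ->
  exists (x1 x2 x3 : R -> R) (T : R),
    0 < T /\
    ricci_flow_on d x1 x2 x3 T /\
    ricci_pos_def d (x1 0) (x2 0) (x3 0) /\
    ricci_signature_d_2d d (x1 T) (x2 T) (x3 T).
Proof.
  intros Hd Hw Hlo HT Hcube HT_small Hslopes Hpos Hfinal.
  destruct (ricci_flow_in_cube d x w lo hi T Hd Hw Hlo HT Hcube HT_small Hslopes)
    as [y [Hy0 [Hflow Htraj]]].
  exists (y ax1), (y ax2), (y ax3), T. split; [exact HT|]. split; [exact Hflow|].
  split.
  - rewrite !Hy0. exact Hpos.
  - apply (Hfinal (fun i => y i T)). intros i. apply Htraj. lra.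
Qed.

Definition state3 (a b c : R) (i : axis) : R :=
  match i with ax1 => a | ax2 => b | ax3 => c end.

(* Explicit data for d = 2, 4, 8.  Each initial metric has r_1, r_2 > 0 and
   r_3 > 0 only barely: its third coordinate slightly exceeds the root of the
   numerator of r_3.  Within the short time T the flow pushes that numerator
   below zero while r_1 and r_2 stay positive. *)
Lemma flag_example_2 : exists (x1 x2 x3 : R -> R) (T : R),
    0 < T /\ ricci_flow_on 2 x1 x2 x3 T /\
    ricci_pos_def 2 (x1 0) (x2 0) (x3 0) /\
    ricci_signature_d_2d 2 (x1 T) (x2 T) (x3 T).
Proof.
  apply (positive_to_mixed_signature 2 (state3 10 1 (640313/100000)) (1/500)
           (499/500) (5001/500) (1/20000)); try lra.
  - intros []; simpl; lra.
  - intros []; unfold field_lower, field_upper, speed_lower, speed_upper; simpl; lra.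
  - unfold ricci_pos_def, r1, r2, r3, ric; simpl. repeat split; lra.
  - intros y Hy.
    apply (signature_third_negative_on_box 2 _ _ _ _ _ _ _ _ _ (Hy ax1) (Hy ax2) (Hy ax3));
      unfold field_lower, field_upper, speed_lower, speed_upper; simpl; lra.
Qed.

Lemma flag_example_4 : exists (x1 x2 x3 : R -> R) (T : R),
    0 < T /\ ricci_flow_on 4 x1 x2 x3 T /\
    ricci_pos_def 4 (x1 0) (x2 0) (x3 0) /\
    ricci_signature_d_2d 4 (x1 T) (x2 T) (x3 T).
Proof.
  apply (positive_to_mixed_signature 4 (state3 12 1 (700001/100000)) (1/1000)
           (999/1000) (12001/1000) (1/100000)); try lra.
  - intros []; simpl; lra.
  - intros []; unfold field_lower, field_upper, speed_lower, speed_upper; simpl; lra.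
  - unfold ricci_pos_def, r1, r2, r3, ric; simpl. repeat split; lra.
  - intros y Hy.
    apply (signature_third_negative_on_box 4 _ _ _ _ _ _ _ _ _ (Hy ax1) (Hy ax2) (Hy ax3));
      unfold field_lower, field_upper, speed_lower, speed_upper; simpl; lra.
Qed.

Lemma flag_example_8 : exists (x1 x2 x3 : R -> R) (T : R),
    0 < T /\ ricci_flow_on 8 x1 x2 x3 T /\
    ricci_pos_def 8 (x1 0) (x2 0) (x3 0) /\
    ricci_signature_d_2d 8 (x1 T) (x2 T) (x3 T).
Proof.
  apply (positive_to_mixed_signature 8 (state3 12 1 (608277/100000)) (3/1000)
           (997/1000) (12003/1000) (1/100000)); try lra.
  - intros []; simpl; lra.
  - intros []; unfold field_lower, field_upper, speed_lower, speed_upper; simpl; lra.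
  - unfold ricci_pos_def, r1, r2, r3, ric; simpl. repeat split; lra.
  - intros y Hy.
    apply (signature_third_negative_on_box 8 _ _ _ _ _ _ _ _ _ (Hy ax1) (Hy ax2) (Hy ax3));
      unfold field_lower, field_upper, speed_lower, speed_upper; simpl; lra.
Qed.

Theorem theorem4p1 :
  forall d : R, (d = 2 \/ d = 4 \/ d = 8) ->
  exists (x1 x2 x3 : R -> R) (T : R),
    0 < T /\
    ricci_flow_on d x1 x2 x3 T /\
    ricci_pos_def d (x1 0) (x2 0) (x3 0) /\
    ricci_signature_d_2d d (x1 T) (x2 T) (x3 T).
Proof.
  intros d [-> | [-> | ->]].
  - exact flag_example_2.
  - exact flag_example_4.
  - exact flag_example_8.
Qed.
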